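(* Let $(X,0)$ be a pointed CFG-space over a Boolean algebra $B$, and let $U_1,U_2\subset X$ be subsets which are CFG-spaces with the restricted metric and satisfy $0\in U_1\cap U_2$. If $U_1$ is isometric to $U_2$, then $U_1^\perp$ is isometric to $U_2^\perp$.
   Context: A Boolean metric space over $B$ is a set $X$ with symmetric $d:X\times X\to B$, $d(x,y)=0$ iff $x=y$, and $d(x,z)\le d(x,y)\vee d(y,z)$. An isometry is a bijection preserving $d$. A partition of $B$ is a finite family of pairwise disjoint elements with supremum $1$; $x$ is a convex combination of $x_0,\dots,x_n$ with coefficients a partition $a_0,\dots,a_n$ if $a_i\wedge d(x,x_i)=0$ for all $i$. A CFG-space is a Boolean metric space that is convex (every such convex combination of its points exists in it) and finitely generated (some finite subset $S$ has every point as a convex combination of points of $S$). A pointed space is a pair $(X,0)$ with $0\in X$ a fixed point; write $|x|=d(x,0)$. Elements $x,y$ are orthogonal, $x\perp y$, if $d(x,y)=|x|\vee|y|$. For $U\subset X$ with $0\in U$, $U^\perp=\{y\in X: x\perp y\ \forall x\in U\}$ (with the restricted metric). *)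

(* A Boolean algebra is a ctbDistrLatticeType
   (complemented distributive lattice with top and bottom). *)
From HB Require Import structures.
From mathcomp Require Import all_boot all_order.
From Stdlib Require List.
Set Implicit Arguments. Unset Strict Implicit. Unset Printing Implicit Defensive.
Import Order.TTheory.
Local Open Scope order_scope.

Section BoolMetric.
Context {disp : Order.disp_t} {B : ctbDistrLatticeType disp} {T : Type}.
Variable d : T -> T -> B.

Definition bool_metric : Prop :=
  [/\ forall x y, d x y = d y x,
      forall x y, d x y = \bot <-> x = y
    & forall x y z, d x z <= d x y `|` d y z].

Definition bpartition (a : seq B) : Prop :=
  (forall i j, (i < size a)%N -> (j < size a)%N -> i <> j ->
     nth \bot a i `&` nth \bot a j = \bot) /\
  \join_(b <- a) b = \top.

(* x is a convex combination of the points ps.2 with coefficients ps.1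
   (the coefficients are assumed to form a partition separately). *)
Definition convex_comb (x : T) (ps : seq (B * T)%type) : Prop :=
  forall p, List.In p ps -> p.1 `&` d x p.2 = \bot.

Definition bconvex (A : T -> Prop) : Prop :=
  forall ps : seq (B * T)%type, bpartition (map fst ps) ->
    (forall p, List.In p ps -> A p.2) ->
    exists x, A x /\ convex_comb x ps.

Definition fin_gen (A : T -> Prop) : Prop :=
  exists S : seq T, (forall s, List.In s S -> A s) /\
    forall x, A x -> exists ps : seq (B * T)%type,
      [/\ bpartition (map fst ps), (forall p, List.In p ps -> List.In p.2 S)
        & convex_comb x ps].

Definition CFG (A : T -> Prop) : Prop := bconvex A /\ fin_gen A.

Definition isometric (A1 A2 : T -> Prop) : Prop :=
  exists f : {x | A1 x} -> {x | A2 x},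
    bijective f /\
    forall x y, d (proj1_sig (f x)) (proj1_sig (f y)) = d (proj1_sig x) (proj1_sig y).

Definition orth (o x y : T) : Prop := d x y = d x o `|` d y o.

Definition perp (o : T) (U : T -> Prop) : T -> Prop :=
  fun y => forall x, U x -> orth o x y.

End BoolMetric.

From HB Require Import structures.
From mathcomp Require Import all_boot all_order.
From Stdlib Require List ProofIrrelevance.
From Stdlib Require Import ClassicalEpsilon.
Set Implicit Arguments. Unset Strict Implicit. Unset Printing Implicit Defensive.
Import Order.Theory.

(* Work inside a finite model: a family g : I -> X containing
   generators of X, generators of U1 together with o and the preimage of o
   under the isometry f : U1 -> U2, and the images of the latter under f.
   Over an atom c of the finite Boolean algebra generated by the distances
   d (g i) (g j) two members of the family either coincide or are at distance
   c, so "coinciding over c" is an equivalence relation on I.  Every point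
   of X is glued from the g i along a partition, and a point is orthogonal to
   U exactly when, over each atom, each of its pieces lies in a class that is
   the class of o or meets no generator of U ("admissible" classes).  For
   each atom the admissible classes for U1 and for U2 are equinumerous, and
   gluing class bijections along the atoms gives an isometry from U1^perp
   onto U2^perp. *)

Local Open Scope order_scope.

Section BooleanPartitions.
Context {disp : Order.disp_t} {B : ctbDistrLatticeType disp}.
Implicit Types (a b c u v x y : B) (l : seq B).

Lemma le_eq_bot x y : x <= y -> y = \bot -> x = \bot.
Proof. by move=> le_xy y0; apply/eqP; rewrite -lex0 -y0. Qed.

Lemma meet_le_bot a a' b : a `&` b = \bot -> a' <= a -> a' `&` b = \bot.
Proof. by move=> ab0 le_a'a; apply: le_eq_bot ab0; apply: leI2. Qed.

Lemma meet3_le a b c : [/\ (b `&` a) `&` c <= a, (b `&` a) `&` c <= b,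
  (b `&` a) `&` c <= c, (b `&` a) `&` c <= c `&` a & (b `&` a) `&` c <= c `&` b].
Proof.
have le_a : (b `&` a) `&` c <= a by rewrite meetAC; exact: leIr.
have le_b : (b `&` a) `&` c <= b by rewrite -meetA; exact: leIl.
have le_c : (b `&` a) `&` c <= c by exact: leIr.
by split => //; rewrite lexI ?le_a ?le_b le_c.
Qed.

Lemma le_join_seq x l : x \in l -> x <= \join_(b <- l) b.
Proof. by move=> hx; exact: (@joins_sup_seq _ _ _ l xpredT id x hx). Qed.

Lemma meet_join_bot x l : (forall y, y \in l -> x `&` y = \bot) ->
  x `&` \join_(b <- l) b = \bot.
Proof.
elim: l => [|y l IH] h; first by rewrite big_nil meetx0.
rewrite big_cons meetUr h ?inE ?eqxx // IH ?join0x // => z hz.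
by apply: h; rewrite inE hz orbT.
Qed.

Lemma meet_joinr x l : x `&` \join_(b <- l) b = \join_(b <- l) (x `&` b).
Proof. by elim: l => [|y l IH]; rewrite ?big_nil ?meetx0 // !big_cons meetUr IH. Qed.

Lemma join_meet_map x l : \join_(b <- [seq x `&` b | b <- l]) b = x `&` \join_(b <- l) b.
Proof. by rewrite big_map meet_joinr. Qed.

Fixpoint disj_tail l : Prop :=
  if l is x :: l' then x `&` \join_(b <- l') b = \bot /\ disj_tail l' else True.

Definition bpart l := disj_tail l /\ \join_(b <- l) b = \top.

Lemma disj_tail_nth l : disj_tail l <->
  (forall i j, (i < size l)%N -> (j < size l)%N -> i <> j ->
     nth \bot l i `&` nth \bot l j = \bot).
Proof.
split.
- elim: l => [|x l IH] //= [hx hl] i j.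
  have x_disj k : (k < size l)%N -> x `&` nth \bot l k = \bot.
    move=> hk; apply: le_eq_bot hx; apply: leI2 => //.
    exact/le_join_seq/mem_nth.
  case: i => [|i]; case: j => [|j] //= hi hj hij.
  + exact: x_disj.
  + by rewrite meetC x_disj.
  + by apply: IH => // ?; apply: hij; congr S.
- elim: l => [|x l IH] //= h; split.
  + apply: meet_join_bot => y hy.
    have := h 0%N (index y l).+1 isT; rewrite /= nth_index // => -> //.
    by rewrite ltnS index_mem.
  + by apply: IH => i j hi hj hij; apply: (h i.+1 j.+1) => // -[].
Qed.

Lemma bpartition_bpart l : bpartition l <-> bpart l.
Proof. by rewrite /bpartition /bpart disj_tail_nth. Qed.

Lemma eq_on_blocks l u v : \join_(b <- l) b = \top ->
  (forall c, c \in l -> c `&` u = c `&` v) -> u = v.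
Proof.
move=> l_top h; rewrite -[u]meet1x -[v]meet1x -l_top.
elim: l h {l_top} => [|x l IH] h; first by rewrite big_nil !meet0x.
rewrite big_cons !meetUl h ?inE ?eqxx // IH // => c hc.
by apply: h; rewrite inE hc orbT.
Qed.

Lemma disj_tail_mem l a b : disj_tail l -> a \in l -> b \in l -> a != b ->
  a `&` b = \bot.
Proof.
elim: l => [|x l IH] //= [hx hl]; rewrite !inE.
have x_disj y : y \in l -> x `&` y = \bot.
  by move=> hy; apply: le_eq_bot hx; apply: leI2 => //; exact: le_join_seq.
case/orP=> [/eqP->|ha]; case/orP=> [/eqP->|hb]; rewrite ?eqxx //.
- by move=> _; apply: x_disj.
- by move=> _; rewrite meetC; apply: x_disj.
- exact: IH.
Qed.

Lemma disj_tail_meet x l : disj_tail l -> disj_tail [seq x `&` b | b <- l].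
Proof.
elim: l => [|y l IH] //= [hy hl]; split; last exact: IH.
rewrite join_meet_map; apply: le_eq_bot hy.
by apply: leI2; exact: leIr.
Qed.

Lemma disj_tail_cat l1 l2 : disj_tail l1 -> disj_tail l2 ->
  \join_(b <- l1) b `&` \join_(b <- l2) b = \bot -> disj_tail (l1 ++ l2).
Proof.
elim: l1 => [|x l1 IH] //= [hx hl1] hl2 h; split.
- rewrite big_cat meetUr hx join0x; apply: le_eq_bot h.
  by apply: leI2 => //; rewrite big_cons; exact: leUl.
- apply: IH => //; apply: le_eq_bot h; apply: leI2 => //; rewrite big_cons; exact: leUr.
Qed.

Lemma join_refine l1 l2 :
  \join_(b <- [seq c `&` b | c <- l1, b <- l2]) b = \join_(b <- l1) b `&` \join_(b <- l2) b.
Proof.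
elim: l1 => [|x l1 IH]; first by rewrite big_nil meet0x.
by rewrite allpairs_cons big_cat IH join_meet_map big_cons meetUl.
Qed.

Lemma bpart_refine l1 l2 : bpart l1 -> bpart l2 ->
  bpart [seq c `&` b | c <- l1, b <- l2].
Proof.
move=> [d1 j1] [d2 j2]; split; last by rewrite join_refine j1 j2 meetxx.
elim: l1 d1 {j1} => [|x l1 IH] // [hx hl1].
rewrite allpairs_cons; apply: disj_tail_cat; [exact: disj_tail_meet | exact: IH |].
rewrite join_meet_map join_refine; apply: le_eq_bot hx.
by apply: leI2; exact: leIl.
Qed.

(* The atoms of the Boolean algebra generated by es (bottom and repetitions
   allowed): the meets of the e in es or of their complements. *)
Fixpoint atoms (es : seq B) : seq B :=
  if es is e :: es' then
    [seq e `&` c | c <- atoms es'] ++ [seq ~` e `&` c | c <- atoms es']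
  else [:: \top].

Lemma bpart_atoms es : bpart (atoms es).
Proof.
elim: es => [|e es [hd hj]] /=.
  by split; [split; [rewrite big_nil meetx0|] | rewrite big_cons big_nil joinx0].
split.
- apply: disj_tail_cat; try exact: disj_tail_meet.
  rewrite !join_meet_map; apply: le_eq_bot (meetxC e).
  by apply: leI2; exact: leIl.
- by rewrite big_cat !join_meet_map hj !meetx1; exact: joinxC.
Qed.

Lemma atoms_split es e c : e \in es -> c \in atoms es ->
  e `&` c = \bot \/ e `&` c = c.
Proof.
elim: es c => [|e0 es IH] c //=; rewrite inE mem_cat => he /orP[] /mapP [c' hc' ->].
- case/orP: he => [/eqP->|he]; first by right; rewrite meetA meetxx.
  by case: (IH _ he hc') => h; [left|right]; rewrite meetCA h ?meetx0.
- case/orP: he => [/eqP->|he]; first by left; rewrite meetA meetxC meet0x.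
  by case: (IH _ he hc') => h; [left|right]; rewrite meetCA h ?meetx0.
Qed.

End BooleanPartitions.

Local Close Scope order_scope.

Section ClassMatching.
Variable I : finType.
Variable E : rel I.
Hypotheses (Erefl : reflexive E) (Esym : symmetric E) (Etrans : transitive E).

Definition rep i := odflt i [pick j | E i j].

Lemma rep_E i : E i (rep i).
Proof. by rewrite /rep; case: pickP => [j|/(_ i)] /=; rewrite ?Erefl. Qed.

Lemma rep_eq i j : E i j -> rep i = rep j.
Proof.
move=> hij; have same_pick : [pick k | E i k] = [pick k | E j k].
  apply: eq_pick => k; apply/idP/idP => h.
  - by apply: Etrans h; rewrite Esym.
  - exact: Etrans h.
by rewrite /rep same_pick; case: pickP => [//|/(_ j)]; rewrite Erefl.
Qed.

Lemma repE i j : (rep i == rep j) = E i j.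
Proof.
apply/eqP/idP => [h|]; last exact: rep_eq.
by apply: (Etrans (rep_E i)); rewrite h Esym; exact: rep_E.
Qed.

Lemma rep_rep i : rep (rep i) = rep i.
Proof. by apply: rep_eq; rewrite Esym rep_E. Qed.

Lemma card_imset_kernel (F1 F2 : I -> I) (P : pred I) :
  {in P &, forall a b, (F1 a == F1 b) = (F2 a == F2 b)} ->
  #|F1 @: P| = #|F2 @: P|.
Proof.
suff le_card (G1 G2 : I -> I) : {in P &, forall a b, (G1 a == G1 b) = (G2 a == G2 b)} ->
    #|G2 @: P| <= #|G1 @: P|.
  by move=> h; apply/eqP; rewrite eqn_leq !le_card // => a b ha hb; rewrite h.
move=> h; pose Psi x := if [pick p in P | G1 p == x] is Some p then G2 p else x.
have -> : G2 @: P = Psi @: (G1 @: P).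
  rewrite -imset_comp; apply: eq_in_imset => p hp /=; rewrite /Psi.
  case: pickP => [q /andP[hq e]|/(_ p)]; last by rewrite hp eqxx.
  by apply/eqP; rewrite -h // eq_sym.
exact: leq_imset_card.
Qed.

Variables (P : pred I) (z : I).
Hypothesis Pz : P z.

(* The indices whose class is the class of z or avoids psi(P).  Over an
   atom these are exactly the positions allowed for the pieces of a point
   orthogonal to the span of psi(P). *)
Definition admissible (psi : I -> I) : pred I :=
  [pred i | E i z || [forall p, P p ==> ~~ E i (psi p)]].

Lemma admissible_closed psi x w : E x w -> admissible psi w -> admissible psi x.
Proof.
move=> hxw /orP [hw|/forallP hw]; apply/orP; first by left; exact: Etrans hw.
right; apply/forallP => p; apply/implyP => hp; apply/negP => hx.
by have := hw p; rewrite hp /= => /negP; apply; apply: Etrans hx; rewrite Esym.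
Qed.

Lemma admissible_repP psi x : x \in [set rep i | i in admissible psi] ->
  admissible psi x /\ rep x = x.
Proof.
case/imsetP => i hi ->; split; last exact: rep_rep.
by apply: admissible_closed hi; rewrite Esym rep_E.
Qed.

(* When the class of z is hit by psi(P), the admissible classes are the
   class of z together with the classes missed by psi(P). *)
Lemma card_admissible psi p : P p -> E z (psi p) ->
  #|[set rep i | i in admissible psi]| =
  (1 + (#|rep @: [set: I]| - #|[set rep (psi q) | q in P]|))%N.
Proof.
move=> hp hz; set S := [set rep (psi q) | q in P].
have hzS : rep z \in S by apply/imsetP; exists p => //; apply: rep_eq.
have sub : S \subset rep @: [set: I].
  by apply/subsetP => x /imsetP [q _ ->]; apply: imset_f; rewrite in_setT.
have -> : [set rep i | i in admissible psi] = rep z |: (rep @: [set: I] :\: S).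
  apply/setP => x; rewrite in_setU1 in_setD; apply/idP/idP.
  - case/imsetP => i /orP [hi|/forallP hi] ->; first by rewrite (rep_eq hi) eqxx.
    apply/orP; right; rewrite imset_f ?in_setT // andbT; apply/negP.
    case/imsetP => q hq /eqP; rewrite repE => e.
    by have := hi q; rewrite (hq : P q) e.
  - case/orP => [/eqP ->|/andP [hS /imsetP [i _ ex]]].
      by apply: imset_f; apply/orP; left; exact: Erefl.
    rewrite ex; apply: imset_f; apply/orP; right.
    apply/forallP => q; apply/implyP => hq; apply/negP => e.
    by move/negP: hS; apply; apply/imsetP; exists q => //; rewrite ex; exact: rep_eq.
rewrite cardsU1 in_setD hzS /= cardsD; congr (_ + (_ - _))%N.
by rewrite (setIidPr sub).
Qed.

Variables (phi : I -> I) (p1 : I).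
Hypotheses (Pp1 : P p1) (Ephi : E z (phi p1))
  (phi_iso : {in P &, forall a b, E (phi a) (phi b) = E a b}).

Lemma card_admissible_eq :
  #|[set rep i | i in admissible id]| = #|[set rep i | i in admissible phi]|.
Proof.
rewrite (card_admissible (psi := id) Pz) ?Erefl // (card_admissible Pp1 Ephi).
congr (1 + (_ - _))%N; apply: card_imset_kernel => a b ha hb /=.
by rewrite !repE phi_iso.
Qed.

Lemma class_matching : exists h : I -> I,
  [/\ forall i, admissible id i -> admissible phi (h i),
      forall i j, admissible id i -> admissible id j -> E (h i) (h j) = E i j
    & forall w, admissible phi w -> exists2 i, admissible id i & E (h i) w].
Proof.
set R1 := [set rep i | i in admissible id].
set R2 := [set rep i | i in admissible phi].
set e1 := enum R1; set e2 := enum R2.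
have size_e : size e1 = size e2 by rewrite /e1 /e2 -!cardE card_admissible_eq.
exists (fun i => nth z e2 (index (rep i) e1)).
have in_e1 i : admissible id i -> rep i \in e1.
  by move=> hi; rewrite mem_enum; apply: imset_f.
have lt_e2 i : admissible id i -> (index (rep i) e1 < size e2)%N.
  by move=> hi; rewrite -size_e index_mem in_e1.
have in_R2 i : admissible id i -> nth z e2 (index (rep i) e1) \in R2.
  by move=> hi; rewrite -mem_enum; apply: mem_nth; apply: lt_e2.
split.
- by move=> i hi; case: (admissible_repP (in_R2 i hi)).
- move=> i j hi hj.
  have [_ ri] := admissible_repP (in_R2 i hi).
  have [_ rj] := admissible_repP (in_R2 j hj).
  rewrite -repE ri rj nth_uniq ?lt_e2 ?enum_uniq // -repE.
  apply/eqP/eqP => [h|->] //.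
  by rewrite -(nth_index z (in_e1 i hi)) h nth_index // in_e1.
- move=> w hw.
  have hwR : rep w \in e2 by rewrite mem_enum; apply: imset_f.
  set k := index (rep w) e2.
  have hk : (k < size e1)%N by rewrite size_e index_mem.
  have [Au ru] : admissible id (nth z e1 k) /\ rep (nth z e1 k) = nth z e1 k.
    by apply: admissible_repP; rewrite -mem_enum mem_nth.
  exists (nth z e1 k) => //.
  by rewrite ru index_uniq ?enum_uniq // /k nth_index //; rewrite Esym; exact: rep_E.
Qed.

End ClassMatching.

Local Open Scope order_scope.

Section BooleanMetric.
Context {disp : Order.disp_t} {B : ctbDistrLatticeType disp} {T : Type}.
Variable d : T -> T -> B.
Hypothesis hd : bool_metric d.

Lemma dsym x y : d x y = d y x.
Proof. by case: hd. Qed.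

Lemma dxx x : d x x = \bot.
Proof. by case: hd => _ h _; apply/h. Qed.

Lemma d_eq x y : d x y = \bot -> x = y.
Proof. by case: hd => _ h _; case: (h x y). Qed.

Lemma dtri x y z : d x z <= d x y `|` d y z.
Proof. by case: hd. Qed.

Lemma dist_substl a x x' y : a `&` d x x' = \bot -> a `&` d x y = a `&` d x' y.
Proof.
have le_subst u u' : a `&` d u u' = \bot -> a `&` d u y <= a `&` d u' y.
  move=> h; apply: le_trans (leI2 (lexx a) (dtri u u' y)) _.
  by rewrite meetUr h join0x.
by move=> h; apply: le_anti; rewrite le_subst //=; apply: le_subst; rewrite dsym.
Qed.

Lemma dist_substr a x y y' : a `&` d y y' = \bot -> a `&` d x y = a `&` d x y'.
Proof. by move=> h; rewrite dsym (dist_substl _ h) dsym. Qed.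

End BooleanMetric.

Lemma sval_inj (A : Type) (Q : A -> Prop) (a b : {x | Q x}) :
  proj1_sig a = proj1_sig b -> a = b.
Proof.
case: a b => [a ha] [b hb] /= e; subst b; congr exist.
exact: ProofIrrelevance.proof_irrelevance.
Qed.

Lemma In_nth (A : Type) (x0 : A) (l : seq A) s : List.In s l ->
  exists2 n, (n < size l)%N & nth x0 l n = s.
Proof.
elim: l => [|a l IH] //= [<-|h]; first by exists 0%N.
by case: (IH h) => n hn e; exists n.+1.
Qed.

Lemma In_map_mem (A : eqType) (C : Type) (F : A -> C) q qs :
  q \in qs -> List.In (F q) (map F qs).
Proof.
elim: qs => [|a qs IH] //=; rewrite inE => /orP [/eqP->|h]; first by left.
by right; exact: IH.
Qed.

Lemma map_fst_relabel (A C D : Type) (F : C -> D) (qs : seq (A * C)) :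
  map fst [seq (q.1, F q.2) | q <- qs] = map fst qs.
Proof. by elim: qs => //= q qs ->. Qed.

Lemma map_pair_id (A C : Type) (qs : seq (A * C)) : [seq (q.1, id q.2) | q <- qs] = qs.
Proof. by elim: qs => [|[a c] qs IH] //=; rewrite IH. Qed.


Lemma lift_pieces (A I : eqType) (T : Type) (g : I -> T) (Q : I -> Prop)
    (ps : seq (A * T)) :
  (forall p, List.In p ps -> exists2 i, Q i & g i = p.2) ->
  exists2 qs : seq (A * I), ps = [seq (q.1, g q.2) | q <- qs] &
    forall q, q \in qs -> Q q.2.
Proof.
elim: ps => [|p ps IH] h; first by exists [::].
have [i hi ei] := h p (or_introl erefl).
have [|qs e hqs] := IH; first by move=> q hq; apply: h; right.
exists ((p.1, i) :: qs); first by rewrite /= -e ei; case: p {h ei}.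
by move=> q; rewrite inE => /orP [/eqP->|]; [|exact: hqs].
Qed.

Section Representations.
Context {disp : Order.disp_t} {B : ctbDistrLatticeType disp} {T : Type}.
Variables (d : T -> T -> B) (I : eqType) (g : I -> T).

Definition represents x (qs : seq (B * I)) :=
  bpart (map fst qs) /\ forall q, q \in qs -> q.1 `&` d x (g q.2) = \bot.

Lemma represents_convex_comb x ps qs : bpartition (map fst ps) ->
  convex_comb d x ps -> ps = [seq (q.1, g q.2) | q <- qs] -> represents x qs.
Proof.
move=> ps_part x_ps e; split.
  by apply/bpartition_bpart; move: ps_part; rewrite e map_fst_relabel.
move=> q hq; apply: (x_ps (q.1, g q.2)); rewrite e.
exact: (In_map_mem (fun q => (q.1, g q.2))).
Qed.

Lemma convex_glue qs : bconvex d (fun _ => True) -> bpart (map fst qs) ->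
  exists x, represents x qs.
Proof.
move=> convex qs_part.
have ps_part : bpartition (map fst [seq (q.1, g q.2) | q <- qs]).
  by apply/bpartition_bpart; rewrite map_fst_relabel.
have [//|x [_ x_qs]] := convex _ ps_part.
by exists x; exact: represents_convex_comb x_qs erefl.
Qed.

Lemma represents_of_gen (Q : I -> Prop) (S : seq T) x ps :
  (forall s, List.In s S -> exists2 i, Q i & g i = s) ->
  bpartition (map fst ps) -> (forall p, List.In p ps -> List.In p.2 S) ->
  convex_comb d x ps -> exists qs, represents x qs /\ forall q, q \in qs -> Q q.2.
Proof.
move=> S_named ps_part ps_S x_ps.
have [|qs e qs_Q] := lift_pieces (g := g) (Q := Q) (ps := ps).
  by move=> p /ps_S /S_named.
by exists qs; split => //; exact: represents_convex_comb x_ps e.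
Qed.

Lemma represents_transport (Q : I -> Prop) (phi : I -> I) u u' qs :
  (forall i, Q i -> d u (g (phi i)) = d u' (g i)) ->
  represents u' qs -> (forall q, q \in qs -> Q q.2) ->
  represents u [seq (q.1, phi q.2) | q <- qs].
Proof.
move=> same_view [qs_part u'_qs] qs_Q; split; first by rewrite map_fst_relabel.
by move=> _ /mapP [q qin ->] /=; rewrite same_view; [exact: u'_qs | exact: qs_Q].
Qed.

Lemma eq_on_pieces ats x y qx qy (u v : B) : bpart ats ->
  represents x qx -> represents y qy ->
  (forall c q1 q2, c \in ats -> q1 \in qx -> q2 \in qy ->
     ((q2.1 `&` q1.1) `&` c) `&` u = ((q2.1 `&` q1.1) `&` c) `&` v) -> u = v.
Proof.
move=> [_ ats_top] [[_ x_top] _] [[_ y_top] _] h.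
apply: (eq_on_blocks ats_top) => c hc.
apply: (eq_on_blocks x_top) => b1 /mapP [q1 hq1 ->].
apply: (eq_on_blocks y_top) => b2 /mapP [q2 hq2 ->].
by rewrite !meetA; apply: h.
Qed.

End Representations.

Section Transfer.
Context {disp : Order.disp_t} {B : ctbDistrLatticeType disp} {T : Type}.
Variable d : T -> T -> B.
Hypothesis hd : bool_metric d.
Variables (I : finType) (g : I -> T) (o : T).

Local Notation represents := (represents d g).

Definition dist_atoms := atoms [seq d (g i) (g j) | i <- enum I, j <- enum I].

Lemma bpart_dist_atoms : bpart dist_atoms.
Proof. exact: bpart_atoms. Qed.

Definition coincide (c : B) : rel I := fun i j => d (g i) (g j) `&` c == \bot.

Lemma coincide_refl c : reflexive (coincide c).
Proof. by move=> i; rewrite /coincide dxx // meet0x. Qed.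

Lemma coincide_sym c : symmetric (coincide c).
Proof. by move=> i j; rewrite /coincide (dsym hd). Qed.

Lemma coincide_trans c : transitive (coincide c).
Proof.
move=> j i k /eqP h1 /eqP h2; apply/eqP.
apply: le_eq_bot (leI2 (dtri hd _ (g j) _) (lexx c)) _.
by rewrite meetUl h1 h2 joinx0.
Qed.

Lemma coincide_congr c i j k : coincide c i j -> coincide c i k = coincide c j k.
Proof.
move=> hij; apply/idP/idP; last exact: coincide_trans.
by apply: coincide_trans; rewrite coincide_sym.
Qed.

Lemma dist_on_atom c (a : B) i j : c \in dist_atoms -> a <= c ->
  a `&` d (g i) (g j) = if coincide c i j then \bot else a.
Proof.
move=> hc le_ac; have -> : a `&` d (g i) (g j) = a `&` (d (g i) (g j) `&` c).
  by rewrite [d _ _ `&` c]meetC meetA (meet_idPl le_ac).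
have dij : d (g i) (g j) \in [seq d (g i) (g j) | i <- enum I, j <- enum I].
  by apply/allpairsP; exists (i, j); rewrite !mem_enum.
rewrite /coincide; case: (atoms_split dij hc) => ->; first by rewrite meetx0 eqxx.
by case: eqP => [->|_]; [rewrite meetx0 | exact: (meet_idPl le_ac)].
Qed.

Variables (P : pred I) (z : I).
Hypothesis gz : g z = o.

Definition admissible_pieces (psi : I -> I) (qs : seq (B * I)) :=
  forall c q, c \in dist_atoms -> q \in qs -> c `&` q.1 != \bot ->
    admissible (coincide c) P z psi q.2.

Section Orthogonality.
Variables (V : T -> Prop) (psi : I -> I).
Hypothesis V_gen : forall p, P p -> V (g (psi p)).

(* A piece of a point orthogonal to V that coincides over an atom with a
   generator of V lies at o over that atom, so it coincides with z. *)
Lemma perp_admissible x qs : perp d o V x -> represents x qs ->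
  admissible_pieces psi qs.
Proof.
move=> x_perp [_ x_qs] c q hc qin hne; apply/orP.
case: (boolP [forall p, P p ==> ~~ coincide c q.2 (psi p)]) => hf; [by right|left].
move/forallPn: hf => [p]; rewrite negb_imply negbK => /andP [hp hE].
set a := c `&` q.1.
have a_x : a `&` d x (g q.2) = \bot by apply: meet_le_bot (x_qs _ qin) _; exact: leIr.
have a_px : a `&` d (g (psi p)) x = \bot.
  rewrite (dist_substr hd (g (psi p)) a_x) (dist_on_atom _ _ hc) ?leIl //.
  by rewrite coincide_sym hE.
have a_xo : a `&` d x o = \bot.
  by apply: le_eq_bot a_px; rewrite (x_perp _ (V_gen hp)); apply: leI2 => //; exact: leUr.
have : a `&` d (g q.2) (g z) = \bot by rewrite gz -(dist_substl hd _ a_x).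
rewrite (dist_on_atom _ _ hc) ?leIl //; case: (coincide c q.2 z) => // a0.
by move: hne; rewrite -/a a0 eqxx.
Qed.

Hypotheses
  (V_rep : forall u, V u -> exists qs,
     represents u [seq (q.1, psi q.2) | q <- qs] /\ forall q, q \in qs -> P q.2)
  (V_o : exists2 p, P p & g (psi p) = o).

Lemma admissible_perp y rs : represents y rs -> admissible_pieces psi rs ->
  perp d o V y.
Proof.
move=> y_rs adm u hu; rewrite /orth.
have [qs [u_qs qs_P]] := V_rep hu.
apply: (eq_on_pieces bpart_dist_atoms y_rs u_qs) => c r _ hc rin /mapP [q qin ->] /=.
have [le_r le_q le_c le_cr _] := meet3_le r.1 q.1 c.
case: (eqVneq (c `&` r.1) \bot) => hcr; first by rewrite (le_eq_bot le_cr hcr) !meet0x.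
set pi := (q.1 `&` r.1) `&` c.
have pi_u : pi `&` d u (g (psi q.2)) = \bot.
  by apply: meet_le_bot (u_qs.2 (q.1, psi q.2) _) le_q; apply/mapP; exists q.
have pi_y : pi `&` d y (g r.2) = \bot := meet_le_bot (y_rs.2 r rin) le_r.
rewrite (dist_substl hd y pi_u) (dist_substr hd (g (psi q.2)) pi_y) meetUr.
rewrite (dist_substl hd o pi_u) [pi `&` d y o](dist_substl hd o pi_y) -gz.
rewrite !(dist_on_atom _ _ hc le_c).
case/orP: (adm c r hc rin hcr) => [r_z|/forallP r_avoids].
  by rewrite coincide_sym r_z joinx0 (coincide_congr _ r_z) coincide_sym.
have q_far := r_avoids q.2; rewrite (qs_P q qin) /= in q_far.
have [p0 hp0 gp0] := V_o.
have o_far := r_avoids p0; rewrite hp0 /= in o_far.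
have -> : coincide c r.2 z = coincide c r.2 (psi p0) by rewrite /coincide gp0 gz.
by rewrite coincide_sym (negbTE q_far) (negbTE o_far); case: ifP; rewrite ?join0x ?joinxx.
Qed.

End Orthogonality.

Variables (phi : I -> I) (p1 : I).
Hypotheses (Pz : P z) (Pp1 : P p1) (gp1 : g (phi p1) = o)
  (phi_iso : forall a b, P a -> P b -> d (g (phi a)) (g (phi b)) = d (g a) (g b)).
Hypotheses (X_convex : bconvex d (fun _ => True))
  (X_rep : forall x, exists qs, represents x qs).
Variables V1 V2 : T -> Prop.
Hypotheses (V1_gen : forall p, P p -> V1 (g p))
  (V2_gen : forall p, P p -> V2 (g (phi p)))
  (V1_rep : forall u, V1 u -> exists qs,
     represents u [seq (q.1, id q.2) | q <- qs] /\ forall q, q \in qs -> P q.2)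
  (V2_rep : forall u, V2 u -> exists qs,
     represents u [seq (q.1, phi q.2) | q <- qs] /\ forall q, q \in qs -> P q.2).

Local Notation adm1 c := (admissible (coincide c) P z id).
Local Notation adm2 c := (admissible (coincide c) P z phi).

Lemma V1_o : exists2 p, P p & g (id p) = o.
Proof. by exists z. Qed.

Lemma V2_o : exists2 p, P p & g (phi p) = o.
Proof. by exists p1. Qed.

(* Over each atom, phi preserves coincidence on P, so the admissible classes
   of V1 and V2 can be matched. *)
Lemma matching_ex c : exists h : I -> I,
  [/\ forall i, adm1 c i -> adm2 c (h i),
      forall i j, adm1 c i -> adm1 c j -> coincide c (h i) (h j) = coincide c i j
    & forall w, adm2 c w -> exists2 i, adm1 c i & coincide c (h i) w].
Proof.
apply: (class_matching (@coincide_refl c) (@coincide_sym c) (@coincide_trans c) Pz Pp1).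
- by rewrite /coincide gz gp1 dxx // meet0x.
- by move=> a b ha hb; rewrite /coincide phi_iso.
Qed.

Definition match_at c := proj1_sig (constructive_indefinite_description _ (matching_ex c)).

Lemma match_atP c :
  [/\ forall i, adm1 c i -> adm2 c (match_at c i),
      forall i j, adm1 c i -> adm1 c j ->
        coincide c (match_at c i) (match_at c j) = coincide c i j
    & forall w, adm2 c w -> exists2 i, adm1 c i & coincide c (match_at c i) w].
Proof. exact: proj2_sig (constructive_indefinite_description _ (matching_ex c)). Qed.

Definition decomp x := proj1_sig (constructive_indefinite_description _ (X_rep x)).

Lemma decompP x : represents x (decomp x).
Proof. exact: proj2_sig (constructive_indefinite_description _ (X_rep x)). Qed.

Definition relabel (F : B -> I -> I) (qs : seq (B * I)) :=
  [seq (c `&` q.1, F c q.2) | c <- dist_atoms, q <- qs].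

Lemma bpart_relabel F qs : bpart (map fst qs) -> bpart (map fst (relabel F qs)).
Proof.
move=> qs_part; rewrite /relabel map_allpairs -allpairs_mapr.
exact: bpart_refine bpart_dist_atoms qs_part.
Qed.

Lemma represents_relabel F qs x c q : represents x (relabel F qs) ->
  c \in dist_atoms -> q \in qs -> (c `&` q.1) `&` d x (g (F c q.2)) = \bot.
Proof. by move=> [_ x_qs] hc hq; apply: (x_qs (c `&` q.1, F c q.2)); exact: allpairs_f. Qed.

Lemma admissible_relabel F qs (psiA psiB : I -> I) :
  admissible_pieces psiA qs ->
  (forall c i, c \in dist_atoms -> admissible (coincide c) P z psiA i ->
     admissible (coincide c) P z psiB (F c i)) ->
  admissible_pieces psiB (relabel F qs).
Proof.
move=> qs_adm F_adm c' _ hc' /allpairsP [[c q] /= [hc hq ->]] /= hne.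
case: (eqVneq c' c) => [e|ne].
  subst c'; apply: F_adm => //; apply: qs_adm => //.
  by move: hne; rewrite meetA meetxx.
by move: hne; rewrite meetA (disj_tail_mem bpart_dist_atoms.1 hc' hc ne) meet0x eqxx.
Qed.

Lemma transfer_ex x : perp d o V1 x ->
  exists y, represents y (relabel match_at (decomp x)) /\ perp d o V2 y.
Proof.
move=> x_perp; have [y y_rep] := convex_glue g X_convex (bpart_relabel match_at (decompP x).1).
exists y; split => //; apply: (admissible_perp V2_rep V2_o y_rep).
apply: (admissible_relabel (psiA := id)); first exact: (perp_admissible (psi := id) V1_gen x_perp (decompP x)).
by move=> c i hc hi; case: (match_atP c) => adm_match _ _; apply: adm_match.
Qed.

Definition transfer (x : {x | perp d o V1 x}) : {y | perp d o V2 y} :=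
  let e := constructive_indefinite_description _ (transfer_ex (proj2_sig x)) in
  exist _ (proj1_sig e) (proj2 (proj2_sig e)).

Lemma transferP x :
  represents (proj1_sig (transfer x)) (relabel match_at (decomp (proj1_sig x))).
Proof. exact: proj1 (proj2_sig (constructive_indefinite_description _ (transfer_ex (proj2_sig x)))). Qed.

(* Below a joint piece of x1 and x2 over an atom, both distances are decided
   by coincidence of labels, which the matching preserves. *)
Lemma transfer_iso x1 x2 :
  d (proj1_sig (transfer x1)) (proj1_sig (transfer x2)) = d (proj1_sig x1) (proj1_sig x2).
Proof.
apply: (eq_on_pieces bpart_dist_atoms (decompP (proj1_sig x1)) (decompP (proj1_sig x2)))
  => c q1 q2 hc hq1 hq2.
have [le_1 le_2 le_c le_c1 le_c2] := meet3_le q1.1 q2.1 c.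
case: (eqVneq ((q2.1 `&` q1.1) `&` c) \bot) => [->|pi0]; first by rewrite !meet0x.
set pi := (q2.1 `&` q1.1) `&` c in pi0 *.
rewrite (dist_substl hd _ (meet_le_bot (represents_relabel (transferP x1) hc hq1) le_c1)).
rewrite (dist_substr hd _ (meet_le_bot (represents_relabel (transferP x2) hc hq2) le_c2)).
rewrite (dist_substl hd _ (meet_le_bot ((decompP _).2 q1 hq1) le_1)).
rewrite (dist_substr hd _ (meet_le_bot ((decompP _).2 q2 hq2) le_2)).
have c1 : c `&` q1.1 != \bot by apply: contraNneq pi0 => /(le_eq_bot le_c1)/eqP.
have c2 : c `&` q2.1 != \bot by apply: contraNneq pi0 => /(le_eq_bot le_c2)/eqP.
have adm_1 := perp_admissible (psi := id) V1_gen (proj2_sig x1) (decompP _) hc hq1 c1.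
have adm_2 := perp_admissible (psi := id) V1_gen (proj2_sig x2) (decompP _) hc hq2 c2.
by rewrite !(dist_on_atom _ _ hc le_c); case: (match_atP c) => _ ->.
Qed.

Lemma transfer_inj : injective transfer.
Proof. by move=> x1 x2 e; apply/sval_inj/(d_eq hd); rewrite -transfer_iso e dxx. Qed.

Lemma unmatch_ex c w : exists i, adm2 c w -> adm1 c i /\ coincide c (match_at c i) w.
Proof.
case: (boolP (adm2 c w)) => hw; last by exists z.
by case: (match_atP c) => _ _ onto; case: (onto w hw) => i hi he; exists i.
Qed.

Definition unmatch c w := proj1_sig (constructive_indefinite_description _ (unmatch_ex c w)).

Lemma unmatchP c w : adm2 c w -> adm1 c (unmatch c w) /\ coincide c (match_at c (unmatch c w)) w.
Proof. exact: proj2_sig (constructive_indefinite_description _ (unmatch_ex c w)). Qed.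

Lemma transfer_surj y : exists x, transfer x = y.
Proof.
have y_rep := decompP (proj1_sig y).
have [x x_rep] := convex_glue g X_convex (bpart_relabel unmatch y_rep.1).
have y_adm := perp_admissible V2_gen (proj2_sig y) y_rep.
have x_perp : perp d o V1 x.
  apply: (admissible_perp V1_rep V1_o x_rep).
  apply: (admissible_relabel (psiA := phi)) => // c i hc hi.
  by case: (unmatchP hi).
exists (exist _ x x_perp); apply/sval_inj/(d_eq hd).
apply: (eq_on_pieces bpart_dist_atoms (decompP x) y_rep) => c q1 q2 hc hq1 hq2.
have [le_1 le_2 le_c le_c1 le_c2] := meet3_le q1.1 q2.1 c.
rewrite meetx0; case: (eqVneq ((q2.1 `&` q1.1) `&` c) \bot) => [->|pi0]; first by rewrite meet0x.
set pi := (q2.1 `&` q1.1) `&` c in pi0 *.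
have x_q1 := meet_le_bot ((decompP x).2 q1 hq1) le_1.
have y_q2 := meet_le_bot (y_rep.2 q2 hq2) le_2.
have tx_q1 := meet_le_bot (represents_relabel (transferP (exist _ x x_perp)) hc hq1) le_c1.
have x_unmatch := meet_le_bot (represents_relabel x_rep hc hq2) le_c2.
have c1 : c `&` q1.1 != \bot by apply: contraNneq pi0 => /(le_eq_bot le_c1)/eqP.
have c2 : c `&` q2.1 != \bot by apply: contraNneq pi0 => /(le_eq_bot le_c2)/eqP.
have adm_1 := perp_admissible (psi := id) V1_gen x_perp (decompP x) hc hq1 c1.
have [adm_u match_u] := unmatchP (y_adm c q2 hc hq2 c2).
have q1_u : coincide c q1.2 (unmatch c q2.2).
  move: (dist_on_atom q1.2 (unmatch c q2.2) hc le_c).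
  rewrite -(dist_substl hd _ x_q1) x_unmatch.
  by case: (coincide c _ _) => // /eqP; rewrite eq_sym (negbTE pi0).
have match_q2 : coincide c (match_at c q1.2) q2.2.
  have [_ match_co _] := match_atP c.
  by apply: coincide_trans match_u; rewrite match_co.
by rewrite (dist_substl hd _ tx_q1) (dist_substr hd _ y_q2) (dist_on_atom _ _ hc le_c) match_q2.
Qed.

Lemma perp_isometric_of_model : isometric d (perp d o V1) (perp d o V2).
Proof.
exists transfer; split; last exact: transfer_iso.
pose inv y := proj1_sig (constructive_indefinite_description _ (transfer_surj y)).
have invK y : transfer (inv y) = y.
  exact: proj2_sig (constructive_indefinite_description _ (transfer_surj y)).
by exists inv => [x|y]; [apply: transfer_inj; rewrite invK | exact: invK].
Qed.

End Transfer.

Section FiniteModel.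
Context {disp : Order.disp_t} {B : ctbDistrLatticeType disp} {T : Type}.
Variables (d : T -> T -> B) (o : T) (U1 U2 : T -> Prop).
Variables (f : {x | U1 x} -> {x | U2 x}) (finv : {x | U2 x} -> {x | U1 x}).
Hypotheses (fK : cancel finv f)
  (f_iso : forall x y, d (proj1_sig (f x)) (proj1_sig (f y)) = d (proj1_sig x) (proj1_sig y)).
Hypotheses (U1o : U1 o) (U2o : U2 o).
Variables S S1 : seq T.
Hypotheses
  (S_gen : forall x, True -> exists ps : seq (B * T), [/\ bpartition (map fst ps),
     forall p, List.In p ps -> List.In p.2 S & convex_comb d x ps])
  (S1_U1 : forall s, List.In s S1 -> U1 s)
  (S1_gen : forall x, U1 x -> exists ps : seq (B * T), [/\ bpartition (map fst ps),
     forall p, List.In p ps -> List.In p.2 S1 & convex_comb d x ps]).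

Definition gens1 := o :: proj1_sig (finv (exist _ o U2o)) :: S1.

Lemma gens1_U1 n : U1 (nth o gens1 n).
Proof.
case: n => [|[|n]] //=; first exact: proj2_sig.
elim: S1 S1_U1 n => [|s S' IH] S'_U1 [|n] //=; first by apply: S'_U1; left.
by apply: IH => s' hs'; apply: S'_U1; right.
Qed.

Definition gen1 (j : 'I_(size gens1)) : {x | U1 x} := exist _ (nth o gens1 j) (gens1_U1 j).

Definition index : finType := ('I_(size S) + 'I_(size gens1) + 'I_(size gens1))%type.

Definition point (i : index) : T :=
  match i with
  | inl (inl a) => nth o S a
  | inl (inr j) => nth o gens1 j
  | inr j => proj1_sig (f (gen1 j))
  end.

Definition in_U1 : pred index := fun i => if i is inl (inr _) then true else false.

Definition to_U2 (i : index) : index := if i is inl (inr j) then inr j else i.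

Definition idx_o : index := inl (inr (@Ordinal (size gens1) 0 isT)).

Definition idx_u0 : index := inl (inr (@Ordinal (size gens1) 1 isT)).

Lemma point_u0 : point (to_U2 idx_u0) = o.
Proof. by rewrite /= (_ : gen1 _ = finv (exist _ o U2o)) ?fK //; exact: sval_inj. Qed.

Lemma to_U2_iso a b : in_U1 a -> in_U1 b ->
  d (point (to_U2 a)) (point (to_U2 b)) = d (point a) (point b).
Proof. by case: a b => [[a|a]|a] [[b|b]|b] //= _ _; exact: f_iso. Qed.

Lemma in_U1_point p : in_U1 p -> U1 (point p).
Proof. by case: p => [[p|p]|p] //= _; exact: gens1_U1. Qed.

Lemma to_U2_point p : in_U1 p -> U2 (point (to_U2 p)).
Proof. by case: p => [[p|p]|p] //= _; exact: proj2_sig. Qed.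

Lemma point_rep x : exists qs, represents d point x qs.
Proof.
have [ps [ps_part ps_S x_ps]] := S_gen x I.
have [|qs [x_qs _]] := represents_of_gen (g := point) (Q := fun _ => True) _ ps_part ps_S x_ps.
  by move=> s /(In_nth o) [n hn <-]; exists (inl (inl (Ordinal hn))).
by exists qs.
Qed.

Lemma U1_rep u : U1 u -> exists qs,
  represents d point u [seq (q.1, id q.2) | q <- qs] /\ forall q, q \in qs -> in_U1 q.2.
Proof.
move=> hu; have [ps [ps_part ps_S1 u_ps]] := S1_gen hu.
have [|qs u_qs] := represents_of_gen (g := point) (Q := in_U1) _ ps_part ps_S1 u_ps.
  move=> s /(In_nth o) [n hn <-].
  by exists (inl (inr (@Ordinal (size gens1) n.+2 hn))).
by exists qs; rewrite map_pair_id.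
Qed.

Lemma U2_rep u : U2 u -> exists qs,
  represents d point u [seq (q.1, to_U2 q.2) | q <- qs] /\ forall q, q \in qs -> in_U1 q.2.
Proof.
move=> hu; set u' := finv (exist _ u hu).
have [qs [u'_qs qs_U1]] := U1_rep (proj2_sig u').
exists qs; split => //; rewrite map_pair_id in u'_qs.
apply: (represents_transport (Q := in_U1)) u'_qs qs_U1 => -[[a|j]|a] //= _.
by rewrite -[u]/(proj1_sig (exist _ u hu)) -(fK (exist _ u hu)) f_iso.
Qed.

Lemma model_perp_isometric : bool_metric d -> bconvex d (fun _ => True) ->
  isometric d (perp d o U1) (perp d o U2).
Proof.
move=> hd X_convex.
exact: (perp_isometric_of_model hd (z := idx_o) (p1 := idx_u0) erefl isT isT point_u0
  to_U2_iso X_convex point_rep in_U1_point to_U2_point U1_rep U2_rep).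
Qed.

End FiniteModel.

Theorem theorem3p1 (disp : Order.disp_t) (B : ctbDistrLatticeType disp)
  (T : Type) (d : T -> T -> B) (o : T)
  (hd : bool_metric d) (hX : CFG d (fun _ => True))
  (U1 U2 : T -> Prop) (hU1 : CFG d U1) (hU2 : CFG d U2)
  (h01 : U1 o) (h02 : U2 o) :
  isometric d U1 U2 -> isometric d (perp d o U1) (perp d o U2).
Proof.
move=> [f [[finv _ fK] f_iso]].
have [X_convex [S [_ S_gen]]] := hX.
have [_ [S1 [S1_U1 S1_gen]]] := hU1.
exact: (model_perp_isometric fK f_iso h01 h02 S_gen S1_U1 S1_gen hd X_convex).
Qed.
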